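(* Fix real $R_1,R_2\ge1$. For a prime $\ell$ and real $N\ge1$, let $\mathcal{C}'_\ell(N,R_1,R_2)$ be the set of triples $(a,b,c)\in\mathcal{R}_{\mathbb{Z}^3}(N,R_1,R_2)$ that are not $\ell$-carefree. Then \[ \frac{\#\mathcal{C}'_\ell(N,R_1,R_2)}{N}=O\Big(\ell^{-4/3}+\frac1{\sqrt N}\Big), \] with implied constant depending only on $R_1,R_2$ (not on $N$ or $\ell$).
   Context: $\mathcal{R}_{\mathbb{Z}^3}(N,R_1,R_2)=\{(a,b,c)\in\mathbb{Z}_{\ge1}^3:\ ab^{2/3}c<N,\ a/c\in[1,R_1],\ b\in[1,R_2]\}$. A triple $(a,b,c)$ of positive integers is $\ell$-carefree if $\ell^2\nmid ab$, $\ell^2\nmid bc$ and $\ell^2\nmid ca$. *)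

From HB Require Import structures.
From mathcomp Require Import all_boot all_order all_algebra finmap.
From mathcomp Require Import all_classical all_reals all_analysis.
Set Implicit Arguments. Unset Strict Implicit. Unset Printing Implicit Defensive.
Import Order.TTheory GRing.Theory Num.Theory.
Local Open Scope classical_set_scope.
Local Open Scope ring_scope.

Definition carefree (l a b c : nat) : bool :=
  [&& ~~ (l ^ 2 %| a * b)%N, ~~ (l ^ 2 %| b * c)%N & ~~ (l ^ 2 %| c * a)%N].

Definition RZ3 {R : realType} (N R1 R2 : R) : set (nat * nat * nat) :=
  [set t | [/\ [&& (0 < t.1.1)%N, (0 < t.1.2)%N & (0 < t.2)%N],
     (t.1.1)%:R * ((t.1.2)%:R `^ (2 / 3)) * (t.2)%:R < N,
     ((1 : R) <= (t.1.1)%:R / (t.2)%:R <= R1) &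
     ((1 : R) <= (t.1.2)%:R <= R2)]].

Definition Cprime {R : realType} (l : nat) (N R1 R2 : R) : set (nat * nat * nat) :=
  RZ3 N R1 R2 `&` [set t | ~~ carefree l t.1.1 t.1.2 t.2].

Definition card_Cprime {R : realType} (l : nat) (N R1 R2 : R) : nat :=
  #|` fset_set (Cprime l N R1 R2) |%N.

(* Membership in R(N,R1,R2) gives b <= R2, c <= a <= (R1+1) c and a c <= N, hence
   c <= sqrt N and a <= (R1+1) sqrt N.  If l <= R2 the trivial count O(N) is already
   O(N l^-2).  If l > R2 then l does not divide b, so a triple that is not l-carefree
   has l^2 | a, l^2 | c, or l | a and l | c; each pattern cuts the box of pairs (a, c)
   by a factor l^2.  Thus #C'_l <= K N l^-2 with K depending only on R1 and R2, which
   is stronger than the claimed bound. *)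

From HB Require Import structures.
From mathcomp Require Import all_boot all_order all_algebra finmap.
From mathcomp Require Import all_classical all_reals all_analysis.
From mathcomp Require Import zify ring lra.
From Stdlib Require PeanoNat.
Import Order.TTheory GRing.Theory Num.Theory.

Local Open Scope nat_scope.

Lemma sqrt_sqr_le m : Nat.sqrt m * Nat.sqrt m <= m.
Proof. by have [/ssrnat.leP] := PeanoNat.Nat.sqrt_spec m (PeanoNat.Nat.le_0_l m). Qed.

Lemma leq_sqrt a m : a * a <= m -> a <= Nat.sqrt m.
Proof.
move=> /ssrnat.leP/PeanoNat.Nat.sqrt_le_mono.
by rewrite PeanoNat.Nat.sqrt_square => /ssrnat.leP.
Qed.

Definition multiple_upto (X d a : nat) : bool := [&& 0 < a, a <= X & d %| a].

Lemma sum_multiple_upto m X d : \sum_(0 <= a < m) multiple_upto X d a <= X %/ d.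
Proof.
have vanish a : X < a -> multiple_upto X d a = false.
  by rewrite /multiple_upto ltnNge => /negbTE->; rewrite andbF.
apply: (@leq_trans (\sum_(0 <= a < X.+1) multiple_upto X d a)).
  have [mX|Xm] := leqP m X.+1.
    by rewrite (big_cat_nat (leq0n m) mX) leq_addr.
  rewrite (big_cat_nat (leq0n X.+1) (ltnW Xm)) /= [X in _ + X]big1_seq ?addn0 //.
  by move=> a /andP[_]; rewrite mem_index_iota => /andP[Xa _]; rewrite vanish.
rewrite divn_count_dvd big_ltn //= add0n; apply/eq_leq/eq_big_nat => a /andP[a0 aX].
by rewrite /multiple_upto a0 -ltnS aX.
Qed.

Lemma sum_multiple_pairs m X Y d1 d2 :
  (\sum_(0 <= a < m) \sum_(0 <= c < m)
     (multiple_upto X d1 a * multiple_upto Y d2 c)) * (d1 * d2) <= X * Y.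
Proof.
under eq_bigr do rewrite -big_distrr /=; rewrite -big_distrl /=.
rewrite mulnACA; apply: leq_trans (leq_mul (leq_divM X d1) (leq_divM Y d2)).
by apply: leq_mul; rewrite leq_mul2r (sum_multiple_upto m) orbT.
Qed.

Lemma sum3_const_middle (m k : nat) (F : nat -> nat -> nat) :
  \sum_(0 <= a < m) \sum_(0 <= b < k) \sum_(0 <= c < m) F a c
  = k * \sum_(0 <= a < m) \sum_(0 <= c < m) F a c.
Proof.
by under eq_bigr do rewrite sum_nat_const_nat subn0; rewrite -big_distrr.
Qed.

Lemma not_carefree_dvd [l a b c] : prime l -> ~~ (l %| b) -> ~~ carefree l a b c ->
  [|| l ^ 2 %| a, l ^ 2 %| c | (l %| a) && (l %| c)].
Proof.
move=> l_prime lb.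
have cop x : ~~ (l %| x) -> coprime (l ^ 2) x.
  by move=> lx; rewrite coprimeXl // prime_coprime.
rewrite /carefree !negb_and !negbK => /or3P[h|h|h].
- by rewrite -(Gauss_dvdl _ (cop b lb)) h.
- by rewrite -(Gauss_dvdr c (cop b lb)) h orbT.
have [_|/cop ca] := boolP (l %| a); last by rewrite -(Gauss_dvdl c ca) h orbT.
have [_|/cop cc] := boolP (l %| c); last by rewrite -(Gauss_dvdr a cc) h.
by rewrite !orbT.
Qed.

Definition bad_triple (l B r n a b c : nat) : bool :=
  [&& 0 < a, 0 < b, 0 < c, b <= B, c <= a, a <= r * c, a * c <= n
    & ~~ carefree l a b c].

Definition bad_triple_count (l B r n : nat) : nat :=
  \sum_(0 <= a < n.+1) \sum_(0 <= b < B.+1) \sum_(0 <= c < n.+1)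
    bad_triple l B r n a b c.

Section BadTripleCount.
Variables (l B r n : nat).
Hypothesis l_prime : prime l.

Let Y := Nat.sqrt n.
Let box d1 d2 a c := multiple_upto (r * Y) d1 a * multiple_upto Y d2 c.
Let box_count d1 d2 := \sum_(0 <= a < n.+1) \sum_(0 <= c < n.+1) box d1 d2 a c.

Lemma bad_triple_in_box [a b c] : bad_triple l B r n a b c ->
  [/\ 0 < a, 0 < c, a <= r * Y & c <= Y].
Proof.
case/and5P=> a0 _ c0 _ /and4P[ca ar acn _].
have cY : c <= Y by apply: leq_sqrt; apply: leq_trans acn; rewrite leq_mul2r ca orbT.
by split=> //; apply: leq_trans ar _; rewrite leq_mul2l cY orbT.
Qed.

Lemma box_count_le d1 d2 : box_count d1 d2 * (d1 * d2) <= r * n.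
Proof.
apply: leq_trans (sum_multiple_pairs _ _ _ _ _) _.
by rewrite -mulnA leq_mul2l sqrt_sqr_le orbT.
Qed.

Lemma bad_triple_le_box a b c : bad_triple l B r n a b c <=
  if l <= B then box 1 1 a c
  else box (l ^ 2) 1 a c + box 1 (l ^ 2) a c + box l l a c.
Proof.
case bad: (bad_triple _ _ _ _ _ _ _) => //.
have [a0 c0 aY cY] := bad_triple_in_box bad.
rewrite /box /multiple_upto a0 c0 aY cY !dvd1n /=.
case: (leqP l B) => //= Bl.
case/and5P: bad => _ b0 _ bB /and4P[_ _ _ nc].
have lb : ~~ (l %| b) by apply/negP => /(dvdn_leq b0); lia.
by case/or3P: (not_carefree_dvd l_prime lb nc) => [->|->|/andP[-> ->]];
  rewrite ?muln1 ?mul1n ?addn0 ?add0n ?addn1 ?add1n.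
Qed.

Lemma bad_triple_count_le_boxes : bad_triple_count l B r n <= B.+1 *
  if l <= B then box_count 1 1
  else box_count (l ^ 2) 1 + box_count 1 (l ^ 2) + box_count l l.
Proof.
have -> : (if l <= B then box_count 1 1
           else box_count (l ^ 2) 1 + box_count 1 (l ^ 2) + box_count l l)
    = \sum_(0 <= a < n.+1) \sum_(0 <= c < n.+1) if l <= B then box 1 1 a c
      else box (l ^ 2) 1 a c + box 1 (l ^ 2) a c + box l l a c.
  case: leqP => _ //; rewrite -!big_split; apply: eq_bigr => a _.
  by rewrite -!big_split.
rewrite -sum3_const_middle; do 3 (apply: leq_sum => ? _).
exact: bad_triple_le_box.
Qed.

Lemma bad_triple_count_le : bad_triple_count l B r n * l ^ 2 <= 3 * r * B.+1 ^ 3 * n.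
Proof.
apply: leq_trans (leq_mul bad_triple_count_le_boxes (leqnn _)) _.
have -> : 3 * r * B.+1 ^ 3 * n = B.+1 * (3 * (r * n)) * B.+1 ^ 2.
  by rewrite (expnS _ 2); ring.
case: (leqP l B) => [lB|_].
  have l2 : l ^ 2 <= B.+1 ^ 2 by rewrite leq_exp2r // leqW.
  apply: leq_mul l2; rewrite leq_mul2l; apply/orP; right.
  by have := box_count_le 1 1; rewrite !muln1 => /leq_trans->; rewrite ?leq_pmull.
apply: (@leq_trans (B.+1 * (3 * (r * n)))); last by rewrite leq_pmulr ?expn_gt0.
rewrite -mulnA leq_mul2l; apply/orP; right.
move: (box_count_le (l ^ 2) 1) (box_count_le 1 (l ^ 2)) (box_count_le l l).
rewrite muln1 mul1n mulnn; lia.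
Qed.

End BadTripleCount.

Lemma card_fset_set_le_sum3 (S : set (nat * nat * nat)) (m1 m2 m3 : nat)
    (P : nat -> nat -> nat -> bool) :
  (forall a b c, S (a, b, c) -> [&& a < m1, b < m2, c < m3 & P a b c]) ->
  #|` fset_set S| <= \sum_(0 <= a < m1) \sum_(0 <= b < m2) \sum_(0 <= c < m3) P a b c.
Proof.
move=> SP.
pose grid := [seq (ab, c) | ab <- [seq (a, b) | a <- index_iota 0 m1, b <- index_iota 0 m2],
                            c <- index_iota 0 m3].
pose Pt (t : nat * nat * nat) := P t.1.1 t.1.2 t.2.
have sub : (S `<=` [set` seq_fset tt (seq.filter Pt grid)])%classic.
  move=> [[a b] c] /SP /and4P[a1 b2 c3 Pabc].
  change ((a, b, c) \in seq_fset tt (seq.filter Pt grid)).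
  rewrite seq_fsetE mem_filter /Pt Pabc /=.
  by apply: allpairs_f; [apply: allpairs_f|]; rewrite mem_index_iota.
have := sub; rewrite fset_set_sub ?set_fsetK; last 2 first.
- exact: sub_finite_set sub (finite_fset _).
- exact: finite_fset.
move=> /fsubset_leq_card /leq_trans; apply.
rewrite size_seq_fset (leq_trans (size_undup _)) // size_filter -sum1_count.
by rewrite big_mkcond /= !big_allpairs.
Qed.

Local Open Scope ring_scope.

Lemma Cprime_bad_triple (R : realType) (N R1 R2 : R) l a b c :
  Cprime l N R1 R2 (a, b, c) ->
  bad_triple l (Num.truncn R2) (Num.truncn R1).+1 (Num.truncn N) a b c.
Proof.
move=> [[/= /and3P[a0 b0 c0] abcN /andP[ac1 ac2] /andP[_ bR2]] /= nc].
have b_pow_ge1 : 1 <= b%:R `^ (2 / 3) :> R.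
  by rewrite -[leLHS](powRr0 b%:R); apply: ler_powR; rewrite ?ler1n //; lra.
have acN : (a * c)%:R <= N.
  apply/ltW/(le_lt_trans _ abcN); rewrite natrM ler_wpM2r //.
  by rewrite -[leLHS]mulr1 ler_wpM2l.
have bB : (b <= Num.truncn R2)%N.
  by rewrite truncn_ge_nat ?(le_trans _ bR2).
have acn : (a * c <= Num.truncn N)%N.
  by rewrite truncn_ge_nat ?(le_trans _ acN).
have ca : (c <= a)%N by rewrite -(ler_nat R); move: ac1; rewrite ler_pdivlMr ?ltr0n // mul1r.
have ar : (a <= (Num.truncn R1).+1 * c)%N.
  rewrite -(ler_nat R) natrM; apply: le_trans (_ : R1 * c%:R <= _).
    by rewrite -ler_pdivrMr ?ltr0n.
  by rewrite ler_wpM2r // ltW // truncnS_gt.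
by rewrite /bad_triple a0 b0 c0 bB ca ar acn nc.
Qed.

Lemma card_Cprime_le (R : realType) l (N R1 R2 : R) :
  (card_Cprime l N R1 R2
     <= bad_triple_count l (Num.truncn R2) (Num.truncn R1).+1 (Num.truncn N))%N.
Proof.
apply: card_fset_set_le_sum3 => a b c /Cprime_bad_triple bad.
rewrite bad andbT; case/and5P: bad => a0 _ c0 bB /and4P[_ _ acn _].
rewrite !ltnS bB; apply/andP; split; nia.
Qed.

Theorem lemma4p1 (R : realType) (R1 R2 : R) (hR1 : 1 <= R1) (hR2 : 1 <= R2) :
  exists C : R, 0 < C /\
    forall (l : nat) (N : R), prime l -> 1 <= N ->
      (card_Cprime l N R1 R2)%:R / N
        <= C * ((l%:R) `^ (- (4 / 3)) + 1 / Num.sqrt N).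
Proof.
pose K := (3 * (Num.truncn R1).+1 * (Num.truncn R2).+1 ^ 3)%N.
exists K%:R; split; first by rewrite ltr0n /K !muln_gt0.
move=> l N l_prime N_ge1.
have N_gt0 : 0 < N by apply: lt_le_trans N_ge1.
have l_ge1 : (1 : R) <= l%:R by rewrite ler1n prime_gt0.
have card_le : (card_Cprime l N R1 R2 * l ^ 2 <= K * Num.truncn N)%N.
  apply: leq_trans (bad_triple_count_le _ _ _ _ l_prime).
  by rewrite leq_mul2r card_Cprime_le orbT.
have ratio_le : (card_Cprime l N R1 R2)%:R / N <= K%:R / l%:R ^+ 2.
  rewrite ler_pdivrMr // mulrAC ler_pdivlMr ?exprn_gt0 ?(lt_le_trans ltr01) //.
  rewrite -natrX -natrM; apply: le_trans (_ : (K * Num.truncn N)%:R <= _).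
    by rewrite ler_nat.
  by rewrite natrM ler_wpM2l // truncn_le ltW.
apply: le_trans ratio_le _; rewrite ler_wpM2l //.
have inv_sqr_le : (l%:R ^+ 2)^-1 <= l%:R `^ (- (4 / 3)) :> R.
  rewrite -powR_invn ?(le_trans ler01) //; apply: ler_powR => //; lra.
have : 0 <= 1 / Num.sqrt N by rewrite divr_ge0 ?sqrtr_ge0.
lra.
Qed.
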